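(* The matrix $A$ normalizes the group $\mathrm{H}$, that is, $A\mathrm{H}A^{-1}=\mathrm{H}$.
   Context: Let $\langle x,y\rangle=x_1y_1+\dots+x_6y_6-x_7y_7$ on $\mathbb{R}^7$, $H^6=\{x:\langle x,x\rangle=-1,x_7>0\}$, and $e_1,\dots,e_7$ the standard basis. $\Gamma^6=PO_{6,1}\mathbb{Z}$ is the group of $7\times7$ integer matrices preserving $\langle\cdot,\cdot\rangle$ and mapping $H^6$ to itself. $\mathrm{K}^6$ is the group of the $64$ matrices $\mathrm{diag}(\varepsilon_1,\dots,\varepsilon_6,1)$, $\varepsilon_i=\pm1$. Define vectors $u_1,\dots,u_{27}$: $u_i=-e_i$ for $1\le i\le 6$; $u_7,\dots,u_{21}$ are $e_a+e_b+e_7$ for the pairs $(a,b)=(1,2),(1,3),(2,3),(1,4),(2,4),(3,4),(1,5),(2,5),(3,5),(4,5),(1,6),(2,6),(3,6),(4,6),(5,6)$ in this order; $u_{22},\dots,u_{27}$ are $\sum_{i=1}^6e_i-e_c+2e_7$ for $c=6,5,4,3,2,1$ in this order. Let $R_j$ be the reflection $x\mapsto x-2\langle x,u_j\rangle u_j$. For $7\le j\le27$ let $k_j\in\mathrm{K}^6$ be the matrix with $\varepsilon_i=-1$ exactly for $i\in N_j$, where $N_7=\{2,3,5\}$, $N_8=\{1,2,3,4,5\}$, $N_9=\{3,4,5\}$, $N_{10}=\{1,2,3,5,6\}$, $N_{11}=\{1,4,6\}$, $N_{12}=\{2,3,5\}$, $N_{13}=\{3,4,5\}$, $N_{14}=\{1,2,5\}$,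 $N_{15}=\{5\}$, $N_{16}=\{2,4,6\}$, $N_{17}=\{1,2,5\}$, $N_{18}=\{2,4,6\}$, $N_{19}=\{6\}$, $N_{20}=\{1,3,4\}$, $N_{21}=\{1,2,3,5,6\}$, $N_{22}=\{1,3,4\}$, $N_{23}=\{2\}$, $N_{24}=\{1,4,6\}$, $N_{25}=\{1,2,3,4,5\}$, $N_{26}=\{4\}$, $N_{27}=\{3\}$. Let $\mathrm{H}$ be the subgroup of $\Gamma^6$ generated by all matrices $\ell R_j\ell k_j$ with $\ell\in\mathrm{K}^6$ and $7\le j\le 27$. Let $A=\begin{pmatrix}1&0&0&0&0&0&0\\0&1&0&0&1&0&-1\\0&0&0&0&0&1&0\\0&-1&0&-1&0&0&1\\0&0&1&0&0&0&0\\0&0&0&-1&-1&0&1\\0&-1&0&-1&-1&0&2\end{pmatrix}\in\Gamma^6.$ *)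

(* Indices: e_1..e_7 are 0-based positions 0..6 of 'cV[int]_7. *)
From HB Require Import structures.
From mathcomp Require Import all_boot all_order all_algebra.
Set Implicit Arguments. Unset Strict Implicit. Unset Printing Implicit Defensive.
Import Order.TTheory GRing.Theory Num.Theory.
Local Open Scope ring_scope.

Definition Jform : 'M[int]_7 := diag_mx (\row_(k < 7) if (k < 6)%N then 1 else -1).

Definition lform (x y : 'cV[int]_7) : int := (x^T *m Jform *m y) 0 0.

(* standard basis vector e_i, 1 <= i <= 7 (1-based) *)
Definition ev (i : nat) : 'cV[int]_7 := \col_(k < 7) (((k : nat) == i.-1)%N)%:R.

Definition pairs_u : seq (nat * nat) :=
  [:: (1,2); (1,3); (2,3); (1,4); (2,4); (3,4); (1,5); (2,5); (3,5); (4,5);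
      (1,6); (2,6); (3,6); (4,6); (5,6)].

Definition u (j : nat) : 'cV[int]_7 :=
  if (j <= 6)%N then - ev j
  else if (j <= 21)%N then
    let p := nth (0%N, 0%N) pairs_u (j - 7) in ev p.1 + ev p.2 + ev 7
  else (\sum_(1 <= i < 7) ev i) - ev (28 - j) + 2 *: ev 7.

Definition Rref (j : nat) : 'M[int]_7 := 1%:M - 2 *: (u j *m (u j)^T *m Jform).

(* K^6 : diag(eps_1,...,eps_6,1); eps k true means entry -1 at (1-based) k.+1 *)
Definition Kof (eps : nat -> bool) : 'M[int]_7 :=
  diag_mx (\row_(k < 7) if (k < 6)%N && eps k then -1 else 1).

Definition inK (l : 'M[int]_7) : Prop := exists eps : nat -> bool, l = Kof eps.

(* the sets N_7, ..., N_27 (1-based coordinates) *)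
Definition Nlist : seq (seq nat) :=
  [:: [:: 2; 3; 5]; [:: 1; 2; 3; 4; 5]; [:: 3; 4; 5]; [:: 1; 2; 3; 5; 6];
      [:: 1; 4; 6]; [:: 2; 3; 5]; [:: 3; 4; 5]; [:: 1; 2; 5]; [:: 5];
      [:: 2; 4; 6]; [:: 1; 2; 5]; [:: 2; 4; 6]; [:: 6]; [:: 1; 3; 4];
      [:: 1; 2; 3; 5; 6]; [:: 1; 3; 4]; [:: 2]; [:: 1; 4; 6];
      [:: 1; 2; 3; 4; 5]; [:: 4]; [:: 3]]%N.

Definition Nset (j : nat) : seq nat := nth [::] Nlist (j - 7).

Definition kmat (j : nat) : 'M[int]_7 := Kof (fun k => (k.+1 \in Nset j)).

Definition isGen (g : 'M[int]_7) : Prop :=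
  exists l j, inK l /\ (7 <= j <= 27)%N /\ g = l *m Rref j *m l *m kmat j.

(* H = subgroup generated by the generators: all finite products of
   generators and their inverses (these matrices are unimodular integer
   matrices, invmx is the inverse over int). *)
Inductive inH : 'M[int]_7 -> Prop :=
| inH_one : inH 1%:M
| inH_gen : forall g M, isGen g -> inH M -> inH (g *m M)
| inH_geninv : forall g M, isGen g -> inH M -> inH (invmx g *m M).

Definition Arows : seq (seq int) :=
  [:: [:: 1; 0; 0; 0; 0; 0; 0];
      [:: 0; 1; 0; 0; 1; 0; -1];
      [:: 0; 0; 0; 0; 0; 1; 0];
      [:: 0; -1; 0; -1; 0; 0; 1];
      [:: 0; 0; 1; 0; 0; 0; 0];
      [:: 0; 0; 0; -1; -1; 0; 1];
      [:: 0; -1; 0; -1; -1; 0; 2]].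

Definition Amat : 'M[int]_7 := \matrix_(i < 7, j < 7) nth 0 (nth [::] Arows i) j.

From HB Require Import structures.
From mathcomp Require Import all_boot all_order all_algebra.
Import GRing.Theory.
Set Implicit Arguments. Unset Strict Implicit. Unset Printing Implicit Defensive.
Local Open Scope ring_scope.

(* The reflections R_1, ..., R_6 are the sign changes generating K^6.  Attach
   to each R_t a sign pattern in K^6: R_t itself if t <= 6, and k_t otherwise.
   A word in the R_t whose sign patterns multiply to 1 lies in H: inserting
   suitable l l = 1 with l in K^6 splits it into factors l R_t l', each of which
   is trivial (t <= 6) or a generator l R_t l k_t of H.  Since
   A R_t A^-1 = R_(A u_t), conjugation by A turns every R_t into an explicit
   short word in the reflections, and the word of each generator of H into a
   word with trivial sign pattern; so A H A^-1 <= H, and likewise for A^-1.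
   The identities between explicit integer matrices are checked by computation. *)

(* [vm_compute] does not unfold the locked [\matrix_] constructor, so explicit
   matrices are handled as lists of rows. *)
Section ListMatrix.
Variable n : nat.

Definition lmx_entry (a : seq (seq int)) (i j : nat) : int := nth 0 (nth [::] a i) j.

Definition mx_of_lmx (a : seq (seq int)) : 'M[int]_n := \matrix_(i, j) lmx_entry a i j.

Definition lmx_of_fun (f : nat -> nat -> int) : seq (seq int) :=
  mkseq (fun i => mkseq (f i) n) n.

Lemma lmx_of_funE f (i j : 'I_n) : lmx_entry (lmx_of_fun f) i j = f i j.
Proof. by rewrite /lmx_entry !nth_mkseq. Qed.

Definition lmx_mul (a b : seq (seq int)) : seq (seq int) := lmx_of_fun (fun i j =>
  foldr (fun k acc => lmx_entry a i k * lmx_entry b k j + acc) 0 (iota 0 n)).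

Lemma mx_of_lmx_mul a b : mx_of_lmx a *m mx_of_lmx b = mx_of_lmx (lmx_mul a b).
Proof.
apply/matrixP => i j; rewrite !mxE lmx_of_funE.
under eq_bigr do rewrite !mxE.
rewrite -(big_mkord xpredT (fun k => lmx_entry a i k * lmx_entry b k j)).
by rewrite /index_iota subn0; elim: (iota 0 n) => [|k s IH]; rewrite ?big_nil ?big_cons ?IH.
Qed.

Definition lmx_id : seq (seq int) := lmx_of_fun (fun i j => (i == j)%:R).

Lemma mx_of_lmx_id : mx_of_lmx lmx_id = 1%:M.
Proof. by apply/matrixP => i j; rewrite !mxE lmx_of_funE. Qed.

Definition lmx_eqb (a b : seq (seq int)) : bool :=
  all (fun i => all (fun j => lmx_entry a i j == lmx_entry b i j) (iota 0 n)) (iota 0 n).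

Lemma mx_of_lmx_eq a b : lmx_eqb a b -> mx_of_lmx a = mx_of_lmx b.
Proof.
move=> /allP eq_ab; apply/matrixP => i j; rewrite !mxE.
have in_iota (k : 'I_n) : (k : nat) \in iota 0 n by rewrite mem_iota add0n ltn_ord.
apply/eqP; exact: (allP (eq_ab i (in_iota i)) j (in_iota j)).
Qed.

End ListMatrix.

Local Notation mx7 := (mx_of_lmx 7).
Local Notation lmx7_mul := (lmx_mul 7).
Local Notation lmx7_id := (lmx_id 7).
Local Notation lmx7_eqb := (lmx_eqb 7).
Local Notation lmx7_of_fun := (lmx_of_fun 7).

Definition ev_seq (i : nat) : seq int := mkseq (fun k => (k == i.-1)%:R) 7.

Definition u_seq (j : nat) : seq int :=
  if (j <= 6)%N then mkseq (fun k => - nth 0 (ev_seq j) k) 7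
  else if (j <= 21)%N then
    let p := nth (0%N, 0%N) pairs_u (j - 7) in
    mkseq (fun k => nth 0 (ev_seq p.1) k + nth 0 (ev_seq p.2) k + nth 0 (ev_seq 7) k) 7
  else mkseq (fun k => (k < 6)%:R - nth 0 (ev_seq (28 - j)) k + 2 * nth 0 (ev_seq 7) k) 7.

Lemma u_seqE j (k : 'I_7) : u j k 0 = nth 0 (u_seq j) k.
Proof.
rewrite /u /u_seq; case: ifP => _; first by rewrite !mxE nth_mkseq // /ev_seq nth_mkseq.
case: ifP => _; first by rewrite !mxE nth_mkseq // /ev_seq !nth_mkseq.
rewrite !mxE summxE /index_iota /= !big_cons big_nil !mxE nth_mkseq // /ev_seq !nth_mkseq //.
by case: k => [[|[|[|[|[|[|[|]]]]]]] ?] //=; rewrite !add0r ?addr0.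
Qed.

Definition Jdiag (b : nat) : int := if (b < 6)%N then 1 else -1.

Definition Rref_lmx (t : nat) : seq (seq int) := lmx7_of_fun (fun a b =>
  (a == b)%:R - 2 * (nth 0 (u_seq t) a * nth 0 (u_seq t) b * Jdiag b)).

Lemma Rref_lmxE t : Rref t = mx7 (Rref_lmx t).
Proof.
apply/matrixP => a b.
by rewrite /Rref /Jform mul_mx_diag !mxE lmx_of_funE big_ord1 !mxE !u_seqE.
Qed.

Definition Kof_lmx (e : nat -> bool) : seq (seq int) := lmx7_of_fun (fun a b =>
  if a == b then (if (a < 6)%N && e a then -1 else 1) else 0).

Lemma Kof_lmxE e : Kof e = mx7 (Kof_lmx e).
Proof.
apply/matrixP => a b; rewrite /Kof !mxE lmx_of_funE.
by have -> : ((a : nat) == b) = (a == b) by []; case: (a == b).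
Qed.

Lemma Kof_eq e e' : (forall k, (k < 6)%N -> e k = e' k) -> Kof e = Kof e'.
Proof.
move=> eq_e; rewrite /Kof; congr diag_mx; apply/rowP => k; rewrite !mxE.
by case: ltnP => // k_lt6; rewrite eq_e.
Qed.

Lemma Kof_mul e e' : Kof e *m Kof e' = Kof (fun k => e k (+) e' k).
Proof.
rewrite /Kof mulmx_diag; congr diag_mx; apply/rowP => k; rewrite !mxE.
by case: (k < 6)%N; case: (e k); case: (e' k); rewrite /= ?mulrNN ?mulr1 ?mul1r.
Qed.

Lemma Kof_false : Kof (fun _ => false) = 1%:M.
Proof. by rewrite Kof_lmxE -(mx_of_lmx_id 7); apply: mx_of_lmx_eq; vm_compute. Qed.

Lemma Kof_sqr e : Kof e *m Kof e = 1%:M.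
Proof. by rewrite Kof_mul -Kof_false; apply: Kof_eq => k _; rewrite addbb. Qed.

Lemma all_iotaP {P : pred nat} {m n t : nat} : all P (iota m n) -> (m <= t < m + n)%N -> P t.
Proof. by move=> /allP allP_iota t_in; apply: allP_iota; rewrite mem_iota. Qed.

Definition refl_index (t : nat) : bool := (0 < t <= 27)%N.
Definition coord_index (t : nat) : bool := (0 < t <= 6)%N.

Lemma refl_index_iota t : refl_index t -> (1 <= t < 1 + 27)%N.
Proof. by case/andP => -> t_le; rewrite add1n ltnS. Qed.

Lemma coord_index_iota t : coord_index t -> (1 <= t < 1 + 6)%N.
Proof. by case/andP => -> t_le; rewrite add1n ltnS. Qed.

Lemma coord_refl_index s : all coord_index s -> all refl_index s.
Proof.
move=> /allP coord_s; apply/allP => t /coord_s /andP[t_gt0 t_le6].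
by rewrite /refl_index t_gt0 (leq_trans t_le6).
Qed.

(* [refl_sign t k] is the sign at coordinate k.+1 of the element of K^6
   attached to R_t. *)
Definition refl_sign (t : nat) (k : nat) : bool :=
  if (t <= 6)%N then k.+1 == t else k.+1 \in Nset t.

Definition word_sign (s : seq nat) (k : nat) : bool :=
  foldr (fun t b => refl_sign t k (+) b) false s.

Lemma word_sign_cat s1 s2 k : word_sign (s1 ++ s2) k = word_sign s1 k (+) word_sign s2 k.
Proof. by elim: s1 => [|t s1 IH] //=; rewrite IH addbA. Qed.

Definition reflw (s : seq nat) : 'M[int]_7 := foldr (fun t M => Rref t *m M) 1%:M s.

Definition reflw_lmx (s : seq nat) : seq (seq int) :=
  foldr (fun t acc => lmx7_mul (Rref_lmx t) acc) lmx7_id s.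

Lemma reflw_lmxE s : reflw s = mx7 (reflw_lmx s).
Proof.
elim: s => [|t s IH] /=; first by rewrite mx_of_lmx_id.
by rewrite IH Rref_lmxE mx_of_lmx_mul.
Qed.

Lemma reflw_cat s1 s2 : reflw (s1 ++ s2) = reflw s1 *m reflw s2.
Proof. by elim: s1 => [|t s1 IH] /=; rewrite ?mul1mx // IH mulmxA. Qed.

Lemma Rref_coord_all :
  all (fun t => lmx7_eqb (Rref_lmx t) (Kof_lmx (refl_sign t))) (iota 1 6).
Proof. by vm_compute. Qed.

Lemma Rref_coord t : coord_index t -> Rref t = Kof (refl_sign t).
Proof.
move=> /coord_index_iota t_in; rewrite Rref_lmxE Kof_lmxE; apply: mx_of_lmx_eq.
exact: all_iotaP Rref_coord_all t_in.
Qed.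

Lemma Rref_sqr_all :
  all (fun t => lmx7_eqb (lmx7_mul (Rref_lmx t) (Rref_lmx t)) lmx7_id) (iota 1 27).
Proof. by vm_compute. Qed.

Lemma Rref_sqr t : refl_index t -> Rref t *m Rref t = 1%:M.
Proof.
move=> /refl_index_iota t_in; rewrite Rref_lmxE mx_of_lmx_mul -(mx_of_lmx_id 7).
apply: mx_of_lmx_eq; exact: all_iotaP Rref_sqr_all t_in.
Qed.

Lemma reflw_coord s : all coord_index s -> reflw s = Kof (word_sign s).
Proof.
elim: s => [|t s IH] /=; first by rewrite -Kof_false.
by case/andP=> t_coord s_coord; rewrite IH // Rref_coord // Kof_mul.
Qed.

Lemma inH_mul M N : inH M -> inH N -> inH (M *m N).
Proof.
elim=> [|g M' g_gen _ IH|g M' g_gen _ IH] N_H; first by rewrite mul1mx.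
  by rewrite -mulmxA; apply: inH_gen => //; apply: IH.
by rewrite -mulmxA; apply: inH_geninv => //; apply: IH.
Qed.

Lemma inH_Kof_reflw s e : all refl_index s ->
  inH (Kof e *m reflw s *m Kof (fun k => e k (+) word_sign s k)).
Proof.
elim: s e => [|t s IH] e /=.
  by move=> _; rewrite mulmx1 (@Kof_eq _ e) ?Kof_sqr; [exact: inH_one | move=> k _; rewrite addbF].
case/andP=> t_refl s_refl; set e1 := fun k => e k (+) refl_sign t k.
have -> : Kof e *m (Rref t *m reflw s) *m Kof (fun k => e k (+) (refl_sign t k (+) word_sign s k))
  = (Kof e *m Rref t *m Kof e1) *m (Kof e1 *m reflw s *m Kof (fun k => e1 k (+) word_sign s k)).
  rewrite (@Kof_eq (fun k => e k (+) (refl_sign t k (+) word_sign s k))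
                  (fun k => e1 k (+) word_sign s k)); last by move=> k _; rewrite /e1 addbA.
  by rewrite !mulmxA -[_ *m Kof e1 *m Kof e1]mulmxA Kof_sqr mulmx1.
apply: inH_mul; last exact: IH.
have [t_le6 | t_gt6] := leqP t 6.
  have t_coord : coord_index t by rewrite /coord_index t_le6 andbT; case/andP: t_refl.
  rewrite Rref_coord // !Kof_mul (@Kof_eq _ (fun _ => false)) ?Kof_false; first exact: inH_one.
  by move=> k _; rewrite /e1; case: (e k); case: (refl_sign t k).
rewrite -[X in inH X]mulmx1; apply: inH_gen; last exact: inH_one.
exists (Kof e), t; split; first by exists e.
split; first by case/andP: t_refl => _ ->; rewrite andbT.
rewrite /e1 -Kof_mul mulmxA; congr (_ *m _); apply: Kof_eq => k _.
by rewrite /refl_sign leqNgt t_gt6.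
Qed.

Lemma inH_reflw s : all refl_index s -> (forall k, (k < 6)%N -> word_sign s k = false) ->
  inH (reflw s).
Proof.
move=> s_refl sign_s; have := @inH_Kof_reflw s (fun _ => false) s_refl.
by rewrite Kof_false mul1mx (@Kof_eq _ (fun _ => false)) ?Kof_false ?mulmx1.
Qed.

Definition sign_word (eps : nat -> bool) : seq nat := [seq i.+1 | i <- iota 0 6 & eps i].

Lemma sign_word_coord eps : all coord_index (sign_word eps).
Proof.
rewrite all_map; apply/allP => i; rewrite mem_filter mem_iota /= /coord_index.
by case/andP => _ ->.
Qed.

Lemma word_sign_sign_word eps k : (k < 6)%N -> word_sign (sign_word eps) k = eps k.
Proof.
rewrite /sign_word.
case E0: (eps 0%N); case E1: (eps 1%N); case E2: (eps 2%N);
case E3: (eps 3%N); case E4: (eps 4%N); case E5: (eps 5%N);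
by case: k => [|[|[|[|[|[|]]]]]] //= _; rewrite ?E0 ?E1 ?E2 ?E3 ?E4 ?E5.
Qed.

Lemma Kof_sign_word eps : Kof eps = reflw (sign_word eps).
Proof.
rewrite reflw_coord ?sign_word_coord //; apply: Kof_eq => k k_lt6.
by rewrite word_sign_sign_word.
Qed.

Lemma Nset_coord_all : all (fun j => all coord_index (Nset j) &&
   all (fun k => word_sign (Nset j) k == (k.+1 \in Nset j)) (iota 0 6)) (iota 7 21).
Proof. by vm_compute. Qed.

Lemma kmat_reflw j : (7 <= j <= 27)%N -> all coord_index (Nset j) /\ kmat j = reflw (Nset j).
Proof.
move=> j_gen; have /andP[N_coord N_sign] := all_iotaP Nset_coord_all j_gen.
split => //; rewrite reflw_coord // /kmat; apply: Kof_eq => k k_lt6.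
by have /eqP -> := all_iotaP N_sign k_lt6.
Qed.

Lemma invmx_eq (R : comUnitRingType) n (M N : 'M[R]_n) : M *m N = 1%:M -> invmx M = N.
Proof.
by move=> MN1; have [M_unit _] := mulmx1_unit MN1; rewrite -[invmx M]mulmx1 -MN1 mulKmx.
Qed.

Definition gen_word (eps : nat -> bool) (j : nat) : seq nat :=
  sign_word eps ++ j :: sign_word eps ++ Nset j.

Definition gen_inv_word (eps : nat -> bool) (j : nat) : seq nat :=
  Nset j ++ sign_word eps ++ j :: sign_word eps.

Lemma gen_refl_index j : (7 <= j <= 27)%N -> refl_index j.
Proof. by case/andP => j_ge7 j_le; rewrite /refl_index j_le (leq_trans _ j_ge7). Qed.

Lemma gen_word_refl_index eps j : (7 <= j <= 27)%N ->
  all refl_index (gen_word eps j) && all refl_index (gen_inv_word eps j).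
Proof.
move=> j_gen; have [N_coord _] := kmat_reflw j_gen.
by rewrite !all_cat /= !all_cat gen_refl_index // !coord_refl_index ?sign_word_coord.
Qed.

Lemma gen_wordE eps j : (7 <= j <= 27)%N ->
  Kof eps *m Rref j *m Kof eps *m kmat j = reflw (gen_word eps j).
Proof.
move=> j_gen; have [_ ->] := kmat_reflw j_gen.
by rewrite /gen_word !reflw_cat /= reflw_cat -!Kof_sign_word !mulmxA.
Qed.

Lemma invmx_gen_wordE eps j : (7 <= j <= 27)%N ->
  invmx (Kof eps *m Rref j *m Kof eps *m kmat j) = reflw (gen_inv_word eps j).
Proof.
move=> j_gen; have [_ k_j] := kmat_reflw j_gen.
apply: invmx_eq; rewrite /gen_inv_word !reflw_cat /= -!Kof_sign_word -k_j !mulmxA.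
rewrite -[_ *m kmat j *m kmat j]mulmxA /kmat Kof_sqr mulmx1.
rewrite -[_ *m Kof eps *m Kof eps]mulmxA Kof_sqr mulmx1.
by rewrite -[_ *m Rref j *m Rref j]mulmxA Rref_sqr ?gen_refl_index // mulmx1 Kof_sqr.
Qed.

Definition conj_word (W : nat -> seq nat) (s : seq nat) : seq nat := flatten (map W s).

Lemma conj_word_cons W t s : conj_word W (t :: s) = W t ++ conj_word W s.
Proof. by []. Qed.

Lemma conj_word_cat W s1 s2 : conj_word W (s1 ++ s2) = conj_word W s1 ++ conj_word W s2.
Proof. by rewrite /conj_word map_cat flatten_cat. Qed.

Section Conjugation.
Variables (X Y : 'M[int]_7) (W : nat -> seq nat).
Hypothesis XY1 : X *m Y = 1%:M.
Hypothesis X_Rref : forall t, refl_index t -> X *m Rref t = reflw (W t) *m X.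
Hypothesis W_refl_index : forall t, refl_index t -> all refl_index (W t).
Hypothesis W_sign_gen : forall j, (7 <= j <= 27)%N -> forall k, (k < 6)%N ->
  word_sign (W j) k = word_sign (conj_word W (Nset j)) k.

Lemma X_reflw s : all refl_index s -> X *m reflw s = reflw (conj_word W s) *m X.
Proof.
elim: s => [|t s IH] /=; first by rewrite mulmx1 mul1mx.
case/andP=> t_refl s_refl.
by rewrite mulmxA X_Rref // -mulmxA IH // mulmxA -reflw_cat.
Qed.

Lemma conj_word_refl_index s : all refl_index s -> all refl_index (conj_word W s).
Proof.
elim: s => [|t s IH] //=; case/andP=> t_refl s_refl.
by rewrite /conj_word /= all_cat W_refl_index //; exact: IH.
Qed.

Lemma conj_inH_reflw s : all refl_index s ->
    (forall k, (k < 6)%N -> word_sign (conj_word W s) k = false) ->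
  inH (X *m reflw s *m Y).
Proof.
move=> s_refl sign_s; rewrite X_reflw // -mulmxA XY1 mulmx1.
by apply: inH_reflw => //; apply: conj_word_refl_index.
Qed.

Lemma conj_inH_gen g : isGen g -> inH (X *m g *m Y) /\ inH (X *m invmx g *m Y).
Proof.
move=> [_ [j [[eps ->] [j_gen ->]]]].
have /andP[gen_refl gen_inv_refl] := gen_word_refl_index eps j_gen.
have sign_j := W_sign_gen j_gen.
rewrite invmx_gen_wordE // gen_wordE //; split; apply: conj_inH_reflw => // k k_lt6;
  rewrite /gen_word /gen_inv_word !(conj_word_cat, conj_word_cons, word_sign_cat) (sign_j k k_lt6);
  by case: (word_sign (conj_word W (sign_word eps)) k); case: (word_sign (conj_word W (Nset j)) k).
Qed.

Lemma conj_inH M : inH M -> inH (X *m M *m Y).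
Proof.
have conj_mul g N : X *m (g *m N) *m Y = (X *m g *m Y) *m (X *m N *m Y).
  by rewrite !mulmxA -[X *m g *m Y *m X]mulmxA (mulmx1C XY1) mulmx1.
elim=> [|g N g_gen _ IH|g N g_gen _ IH].
- by rewrite mulmx1 XY1; exact: inH_one.
- by rewrite conj_mul; apply: inH_mul => //; case: (conj_inH_gen g_gen).
- by rewrite conj_mul; apply: inH_mul => //; case: (conj_inH_gen g_gen).
Qed.
End Conjugation.

Definition conj_words_ok (a : seq (seq int)) (W : nat -> seq nat) : bool :=
  all (fun t => lmx7_eqb (lmx7_mul a (Rref_lmx t)) (lmx7_mul (reflw_lmx (W t)) a)
                && all refl_index (W t)) (iota 1 27)
  && all (fun j => all (fun k => word_sign (W j) k == word_sign (conj_word W (Nset j)) k)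
                       (iota 0 6)) (iota 7 21).

Lemma conj_inH_of_words a b W M : conj_words_ok a W -> mx7 a *m mx7 b = 1%:M ->
  inH M -> inH (mx7 a *m M *m mx7 b).
Proof.
case/andP=> conj_ok sign_ok ab1; apply: (@conj_inH _ _ W) => // [t|t|j j_gen k k_lt6].
- move=> /refl_index_iota t_in; have /andP[conj_t _] := all_iotaP conj_ok t_in.
  by rewrite Rref_lmxE reflw_lmxE !mx_of_lmx_mul; apply: mx_of_lmx_eq.
- by move=> /refl_index_iota t_in; case/andP: (all_iotaP conj_ok t_in).
- by apply/eqP; exact: all_iotaP (all_iotaP sign_ok j_gen) k_lt6.
Qed.

Definition Ainv_rows : seq (seq int) :=
  [:: [:: 1; 0; 0; 0; 0; 0; 0];
      [:: 0; 1; 0; -1; 0; 0; 1];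
      [:: 0; 0; 0; 0; 1; 0; 0];
      [:: 0; 0; 0; -1; 0; -1; 1];
      [:: 0; 1; 0; 0; 0; -1; 1];
      [:: 0; 0; 1; 0; 0; 0; 0];
      [:: 0; 1; 0; -1; 0; -1; 2]].

(* A u_t is +-u_t' or +-R_2 u_t', so A R_t A^-1 = R_(A u_t) is the word
   [t'] or [2; t'; 2]; for A^-1, R_14 plays the role of R_2.  Entry 0 of the
   lists is unused. *)
Definition A_word (t : nat) : seq nat := nth [::]
  [:: [::]; [:: 1]; [:: 2; 11; 2]; [:: 5]; [:: 20]; [:: 2; 18; 2]; [:: 3]; [:: 17];
      [:: 2; 25; 2]; [:: 21]; [:: 2; 7; 2]; [:: 4]; [:: 2; 14; 2]; [:: 10]; [:: 2];
      [:: 16]; [:: 6]; [:: 2; 23; 2]; [:: 19]; [:: 2; 27; 2]; [:: 2; 9; 2]; [:: 12];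
      [:: 13]; [:: 2; 24; 2]; [:: 26]; [:: 8]; [:: 2; 22; 2]; [:: 15]]%N t.

Definition Ainv_word (t : nat) : seq nat := nth [::]
  [:: [::]; [:: 1]; [:: 14]; [:: 6]; [:: 11]; [:: 3]; [:: 16]; [:: 14; 10; 14];
      [:: 25]; [:: 14; 20; 14]; [:: 13]; [:: 14; 2; 14]; [:: 21]; [:: 22];
      [:: 14; 12; 14]; [:: 27]; [:: 15]; [:: 7]; [:: 14; 5; 14]; [:: 18]; [:: 4];
      [:: 9]; [:: 14; 26; 14]; [:: 14; 17; 14]; [:: 14; 23; 14]; [:: 14; 8; 14];
      [:: 24]; [:: 14; 19; 14]]%N t.

Lemma Amat_Ainv : Amat *m mx7 Ainv_rows = 1%:M.
Proof. by rewrite mx_of_lmx_mul -(mx_of_lmx_id 7); apply: mx_of_lmx_eq; vm_compute. Qed.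

Lemma A_words_ok : conj_words_ok Arows A_word.
Proof. by vm_compute. Qed.

Lemma Ainv_words_ok : conj_words_ok Ainv_rows Ainv_word.
Proof. by vm_compute. Qed.

Theorem lemma8p3 :
  forall N : 'M[int]_7,
    inH N <-> exists M : 'M[int]_7, inH M /\ N = Amat *m M *m invmx Amat.
Proof.
move=> N; rewrite (invmx_eq Amat_Ainv); split => [N_H | [M [M_H ->]]].
  exists (mx7 Ainv_rows *m N *m Amat); split.
    exact: conj_inH_of_words Ainv_words_ok (mulmx1C Amat_Ainv) N_H.
  by rewrite !mulmxA Amat_Ainv mul1mx -mulmxA Amat_Ainv mulmx1.
exact: conj_inH_of_words A_words_ok Amat_Ainv M_H.
Qed.
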